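(* Let $Q$ be a left automorphic loop, $S\le Q$, and $x,y\in Q$. If $x\in xS\cap yS$, then $x\backslash(xS\cap yS)=\{x\backslash z : z\in xS\cap yS\}$ is a subloop of $S$.
   Context: A loop is left automorphic if every left inner mapping (element of the stabilizer of $1$ in the group generated by the left translations $L_x:y\mapsto xy$) is an automorphism. $x\backslash y=L_x^{-1}(y)$; $xS=\{xs:s\in S\}$. *)

(* A loop: a set with a binary operation, two-sided identity, and unique
   left/right division (encoded by the division operations and their laws). *)
Record loop := Loop {
  carrier :> Type;
  lmul : carrier -> carrier -> carrier;
  lone : carrier;
  lldiv : carrier -> carrier -> carrier;   (* x \ y = L_x^{-1} y *)
  lrdiv : carrier -> carrier -> carrier;   (* y / x = R_x^{-1} y *)
  lmul_ldiv : forall x y, lmul x (lldiv x y) = y;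
  lldiv_mul : forall x y, lldiv x (lmul x y) = y;
  lrdiv_mul : forall x y, lmul (lrdiv y x) x = y;
  lmul_rdiv : forall x y, lrdiv (lmul y x) x = y;
  lone_mul : forall x, lmul lone x = x;
  lmul_one : forall x, lmul x lone = x
}.

Arguments lmul {l}. Arguments lone {l}. Arguments lldiv {l}. Arguments lrdiv {l}.

(* Elements of the group generated by the left translations L_x : y |-> x y.
   Since the generating set {L_x, L_x^{-1}} is closed under inverses, the
   group consists exactly of the finite composites of generators. *)
Inductive in_LMlt (Q : loop) : (Q -> Q) -> Prop :=
| LMlt_id : in_LMlt Q (fun y => y)
| LMlt_L : forall x f, in_LMlt Q f -> in_LMlt Q (fun y => lmul x (f y))
| LMlt_Linv : forall x f, in_LMlt Q f -> in_LMlt Q (fun y => lldiv x (f y)).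

Definition left_inner_mapping (Q : loop) (f : Q -> Q) : Prop :=
  in_LMlt Q f /\ f lone = lone.

Definition automorphism (Q : loop) (f : Q -> Q) : Prop :=
  (forall a b : Q, f (lmul a b) = lmul (f a) (f b)) /\
  (exists g : Q -> Q, (forall a, g (f a) = a) /\ (forall a, f (g a) = a)).

Definition left_automorphic (Q : loop) : Prop :=
  forall f : Q -> Q, left_inner_mapping Q f -> automorphism Q f.

Definition subloop (Q : loop) (S : Q -> Prop) : Prop :=
  S lone /\
  (forall a b, S a -> S b -> S (lmul a b)) /\
  (forall a b, S a -> S b -> S (lldiv a b)) /\
  (forall a b, S a -> S b -> S (lrdiv a b)).

Definition lcoset (Q : loop) (x : Q) (S : Q -> Prop) : Q -> Prop :=
  fun z => exists s, S s /\ z = lmul x s.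


(* Write x = y s0 with s0 in S.  The map f := L_x^{-1} L_y L_{s0} fixes 1, so it
   is a left inner mapping and hence an automorphism.  Then x \ (xS ∩ yS) is
   exactly S ∩ f(S), an intersection of two subloops. *)

Section LoopFacts.

Context {Q : loop}.

Lemma lmul_left_inj (x a b : Q) : lmul x a = lmul x b -> a = b.
Proof.
  intros E. rewrite <- (lldiv_mul _ x a), <- (lldiv_mul _ x b), E. reflexivity.
Qed.

Lemma lldiv_self (x : Q) : lldiv x x = lone.
Proof.
  apply (lmul_left_inj x). rewrite lmul_ldiv, lmul_one. reflexivity.
Qed.

Lemma lmul_right_inj (x a b : Q) : lmul a x = lmul b x -> a = b.
Proof.
  intros E. rewrite <- (lmul_rdiv _ x a), <- (lmul_rdiv _ x b), E. reflexivity.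
Qed.

Definition fimage (f : Q -> Q) (S : Q -> Prop) : Q -> Prop :=
  fun w => exists u, S u /\ w = f u.

Lemma subloop_ext {S S' : Q -> Prop} :
  (forall w, S w <-> S' w) -> subloop Q S' -> subloop Q S.
Proof.
  intros E [H1 [HM [HL HR]]].
  repeat split; intros; apply E; auto; [apply HM | apply HL | apply HR];
    apply E; assumption.
Qed.

Lemma subloop_inter {S S' : Q -> Prop} :
  subloop Q S -> subloop Q S' -> subloop Q (fun w => S w /\ S' w).
Proof.
  intros [H1 [HM [HL HR]]] [H1' [HM' [HL' HR']]].
  split; [|split; [|split]]; try intros a b [] []; split; auto.
Qed.

Section Automorphism.

Context {f : Q -> Q}.
Hypothesis f_aut : automorphism Q f.

Lemma automorphism_one : f lone = lone.
Proof.
  destruct f_aut as [Hm _]. apply (lmul_left_inj (f lone)).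
  rewrite <- Hm, !lmul_one. reflexivity.
Qed.

Lemma automorphism_ldiv (a b : Q) : f (lldiv a b) = lldiv (f a) (f b).
Proof.
  destruct f_aut as [Hm _]. apply (lmul_left_inj (f a)).
  rewrite <- Hm, !lmul_ldiv. reflexivity.
Qed.

Lemma automorphism_rdiv (a b : Q) : f (lrdiv a b) = lrdiv (f a) (f b).
Proof.
  destruct f_aut as [Hm _]. apply (lmul_right_inj (f b)).
  rewrite <- Hm, !lrdiv_mul. reflexivity.
Qed.

Lemma subloop_fimage {S : Q -> Prop} : subloop Q S -> subloop Q (fimage f S).
Proof.
  destruct f_aut as [Hm _].
  intros [H1 [HM [HL HR]]].
  repeat split.
  - exists lone. split; [assumption | symmetry; apply automorphism_one].
  - intros a b [u [Hu ->]] [v [Hv ->]]. exists (lmul u v). split; [auto | symmetry; apply Hm].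
  - intros a b [u [Hu ->]] [v [Hv ->]].
    exists (lldiv u v). split; [auto | symmetry; apply automorphism_ldiv].
  - intros a b [u [Hu ->]] [v [Hv ->]].
    exists (lrdiv u v). split; [auto | symmetry; apply automorphism_rdiv].
Qed.

End Automorphism.

Lemma ldiv_lcoset_inter {S : Q -> Prop} {x y s0 : Q} :
  subloop Q S -> S s0 -> x = lmul y s0 ->
  forall w,
    (exists z, (lcoset Q x S z /\ lcoset Q y S z) /\ w = lldiv x z) <->
    S w /\ fimage (fun u => lldiv x (lmul y (lmul s0 u))) S w.
Proof.
  intros [_ [HM [HL _]]] Hs0 Hx w. split.
  - intros [z [[[s1 [Hs1 ->]] [s2 [Hs2 E2]]] ->]].
    rewrite lldiv_mul. split; [exact Hs1|].
    exists (lldiv s0 s2). split; [auto|]. rewrite lmul_ldiv, <- E2, lldiv_mul.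
    reflexivity.
  - intros [Hw [u [Hu Ew]]]. exists (lmul x w). split; [split|].
    + exists w. auto.
    + exists (lmul s0 u). split; [auto|]. rewrite Ew, lmul_ldiv. reflexivity.
    + symmetry. apply lldiv_mul.
Qed.

End LoopFacts.

Theorem corollary6p6 (Q : loop) (S : Q -> Prop) (x y : Q) :
  left_automorphic Q ->
  subloop Q S ->
  (lcoset Q x S x /\ lcoset Q y S x) ->
  let T : Q -> Prop :=
    fun w => exists z, (lcoset Q x S z /\ lcoset Q y S z) /\ w = lldiv x z in
  subloop Q T /\ (forall w, T w -> S w).
Proof.
  intros HA HS [_ [s0 [Hs0 Hx]]] T.
  set (f := fun u : Q => lldiv x (lmul y (lmul s0 u))).
  assert (Hf : automorphism Q f).
  { apply HA. split.
    - apply LMlt_Linv, LMlt_L, LMlt_L, LMlt_id.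
    - unfold f. rewrite lmul_one, <- Hx. apply lldiv_self. }
  pose proof (ldiv_lcoset_inter HS Hs0 Hx) as HT.
  split.
  - apply (subloop_ext HT), subloop_inter; [exact HS | exact (subloop_fimage Hf HS)].
  - intros w Hw. apply HT in Hw. tauto.
Qed.
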